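(* A point $(\bar x,\bar y)\in X\times Y$ is a calm local minimax point of $\min_{x\in X}\max_{y\in Y}f(x,y)$ if and only if there exist $\delta_0>0$ and a radius function $\tau$ such that (1) for every $\delta\in(0,\delta_0]$, $x\in X\cap\mathbb{B}_\delta(\bar x)$ and $y\in Y\cap\mathbb{B}_\delta(\bar y)$: $f(\bar x,y)\le f(\bar x,\bar y)\le\max_{y'\in Y\cap\mathbb{B}_{\tau(\|x-\bar x\|)}(\bar y)}f(x,y')$ (so in particular $(\bar x,\bar y)$ is a local minimax point), and (2) the optimal solution mapping $S_{\tau}(x):=\operatorname{argmax}_{y\in Y\cap\mathbb{B}_{\tau(\|x-\bar x\|)}(\bar y)}f(x,y)$ is inner calm at $(\bar x,\bar y)$ with respect to $X$.
   Context: $X\subseteq\mathbb{R}^n$, $Y\subseteq\mathbb{R}^m$ are nonempty closed sets and $f:\mathbb{R}^n\times\mathbb{R}^m\to\mathbb{R}$. $\mathbb{B}_\epsilon(z)$ is the closed Euclidean ball, $\mathbb{B}$ the closed unit ball. Standing assumption: for every $x\in X$, every $\bar y\in Y$ and every $\epsilon\ge0$ the maximum of $f(x,\cdot)$ over $Y\cap\mathbb{B}_\epsilon(\bar y)$ is attained. A radius function is a map $\tau:[0,\infty)\to[0,\infty)$ with $\tau(0)=0$ and $\tau(\delta)\to0$ as $\delta\downarrow0$; it is calm at $0$ if there exist $\kappa>0$, $\delta_1>0$ with $\tau(\delta)\le\kappa\delta$ for all $\delta\in[0,\delta_1]$. $(\bar x,\bar y)\in X\times Y$ is a local minimax point if there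 exist $\delta_0>0$ and a radius function $\tau$ such that for all $\delta\in(0,\delta_0]$, $x\in X\cap\mathbb{B}_\delta(\bar x)$, $y\in Y\cap\mathbb{B}_\delta(\bar y)$: $f(\bar x,y)\le f(\bar x,\bar y)\le\max_{y'\in Y\cap\mathbb{B}_{\tau(\delta)}(\bar y)}f(x,y')$; it is a calm local minimax point if this holds with $\tau$ calm at $0$. A set-valued map $\Gamma:\mathbb{R}^n\rightrightarrows\mathbb{R}^m$ with $\bar y\in\Gamma(\bar x)$ is inner calm at $(\bar x,\bar y)$ with respect to $X$ if there exist $\kappa>0$, $\delta_0>0$ such that $\bar y\in\Gamma(x)+\kappa\|x-\bar x\|\mathbb{B}$ for all $x\in\mathbb{B}_{\delta_0}(\bar x)\cap X$. *)

From HB Require Import structures.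
From mathcomp Require Import all_boot all_order all_algebra.
From mathcomp Require Import all_classical all_reals all_analysis.
Set Implicit Arguments. Unset Strict Implicit. Unset Printing Implicit Defensive.
Import Order.TTheory GRing.Theory Num.Theory.
Import numFieldNormedType.Exports.
Local Open Scope classical_set_scope.
Local Open Scope ring_scope.

Section Defs.
Variable R : realType.

Definition enorm (n : nat) (v : 'rV[R]_n) : R :=
  Num.sqrt (\sum_(i < n) (v ord0 i) ^+ 2).

Definition eball (n : nat) (c : 'rV[R]_n) (eps : R) : set 'rV[R]_n :=
  [set z | enorm (z - c) <= eps].

Variables (n m : nat) (X : set 'rV[R]_n) (Y : set 'rV[R]_m)
  (f : 'rV[R]_n -> 'rV[R]_m -> R).

Definition max_attained : Prop :=
  forall x ybar eps, X x -> Y ybar -> 0 <= eps ->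
    exists2 ys, (Y `&` eball ybar eps) ys &
      forall y, (Y `&` eball ybar eps) y -> f x y <= f x ys.

(* max_{y' in Y ∩ B_eps(ybar)} f(x,y') (a sup, equal to the max under max_attained) *)
Definition maxf (x : 'rV[R]_n) (ybar : 'rV[R]_m) (eps : R) : R :=
  sup [set f x y | y in Y `&` eball ybar eps].

(* radius function, defined on [0,oo) *)
Definition radius_fun (tau : R -> R) : Prop :=
  (forall d, 0 <= d -> 0 <= tau d) /\ tau 0 = 0 /\ tau d @[d --> 0^'+] --> 0.

Definition calm_at0 (tau : R -> R) : Prop :=
  exists kappa, exists delta1, 0 < kappa /\ 0 < delta1 /\
    forall d, 0 <= d <= delta1 -> tau d <= kappa * d.

Definition minimax_cond (xbar : 'rV[R]_n) (ybar : 'rV[R]_m) (delta0 : R)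
    (tau : R -> R) : Prop :=
  forall delta x y, 0 < delta <= delta0 ->
    (X `&` eball xbar delta) x -> (Y `&` eball ybar delta) y ->
    f xbar y <= f xbar ybar /\ f xbar ybar <= maxf x ybar (tau delta).

Definition local_minimax (xbar : 'rV[R]_n) (ybar : 'rV[R]_m) : Prop :=
  X xbar /\ Y ybar /\
  exists delta0, exists tau, 0 < delta0 /\ radius_fun tau /\
    minimax_cond xbar ybar delta0 tau.

Definition calm_local_minimax (xbar : 'rV[R]_n) (ybar : 'rV[R]_m) : Prop :=
  X xbar /\ Y ybar /\
  exists delta0, exists tau, 0 < delta0 /\ radius_fun tau /\ calm_at0 tau /\
    minimax_cond xbar ybar delta0 tau.

Definition S_tau (tau : R -> R) (xbar : 'rV[R]_n) (ybar : 'rV[R]_m)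
    (x : 'rV[R]_n) : set 'rV[R]_m :=
  [set y | (Y `&` eball ybar (tau (enorm (x - xbar)))) y /\
     forall y', (Y `&` eball ybar (tau (enorm (x - xbar)))) y' -> f x y' <= f x y].

End Defs.

Definition inner_calm (R : realType) (n m : nat) (Gamma : 'rV[R]_n -> set 'rV[R]_m)
    (X : set 'rV[R]_n) (xbar : 'rV[R]_n) (ybar : 'rV[R]_m) : Prop :=
  Gamma xbar ybar /\
  exists kappa, exists delta0, 0 < kappa /\ 0 < delta0 /\
    forall x, (eball xbar delta0 `&` X) x ->
      exists2 y, Gamma x y & enorm (ybar - y) <= kappa * enorm (x - xbar).

From HB Require Import structures.
From mathcomp Require Import all_boot all_order all_algebra.
From mathcomp Require Import all_classical all_reals all_analysis.
Set Implicit Arguments. Unset Strict Implicit. Unset Printing Implicit Defensive.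
Import Order.TTheory GRing.Theory Num.Theory.
Import numFieldNormedType.Exports.
Local Open Scope classical_set_scope.
Local Open Scope ring_scope.

(* If (xbar, ybar) is a calm local minimax point with
   radius function tau, then, since tau 0 = 0, the inner max inequality can be
   evaluated on the ball of radius tau(|x - xbar|) itself ("sharp" minimax
   condition); ybar lies in S_tau(xbar), because S_tau(xbar) is the argmax of
   f(xbar, .) over {ybar}; and the calmness tau(d) <= kappa d, together with the
   attainment of the inner max, gives a point of S_tau(x) within kappa |x - xbar|
   of ybar, i.e. inner calmness.

   If S_tau is inner calm with modulus kappa, the linear
   radius function d |-> kappa d is calm, and for |x - xbar| <= delta a selection
   y_x of S_tau(x) with |y_x - ybar| <= kappa delta shows
   f(xbar, ybar) <= max over the tau-ball = f(x, y_x) <= max over the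
   kappa delta-ball. *)

Section EuclideanNorm.
Variable R : realType.

Lemma enorm_ge0 k (v : 'rV[R]_k) : 0 <= enorm v.
Proof. exact: sqrtr_ge0. Qed.

Lemma enorm0 k : enorm (0 : 'rV[R]_k) = 0.
Proof. by rewrite /enorm big1 ?sqrtr0 // => i _; rewrite mxE expr0n. Qed.

Lemma enorm_eq0 k (v : 'rV[R]_k) : enorm v = 0 -> v = 0.
Proof.
move=> /eqP; rewrite sqrtr_eq0 => sum_le0.
have sum0 : \sum_(i < k) (v ord0 i) ^+ 2 = 0.
  by apply/eqP; rewrite eq_le sum_le0 sumr_ge0 // => i _; exact: sqr_ge0.
have coord0 := psumr_eq0P (fun i _ => sqr_ge0 (v ord0 i)) sum0.
by apply/rowP => i; rewrite mxE; apply/eqP; rewrite -sqrf_eq0 coord0.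
Qed.

Lemma enormB k (u v : 'rV[R]_k) : enorm (u - v) = enorm (v - u).
Proof.
rewrite -opprB /enorm; congr Num.sqrt.
by apply: eq_bigr => i _; rewrite mxE sqrrN.
Qed.

Lemma eball_center k (c : 'rV[R]_k) (eps : R) : 0 <= eps -> eball c eps c.
Proof. by rewrite /eball /= subrr enorm0. Qed.

End EuclideanNorm.

Section MaxValue.
Variables (R : realType) (n m : nat) (X : set 'rV[R]_n) (Y : set 'rV[R]_m)
  (f : 'rV[R]_n -> 'rV[R]_m -> R).
Hypothesis max_att : max_attained X Y f.

Lemma maxf_ge x ybar eps y : X x -> Y ybar -> 0 <= eps ->
  (Y `&` eball ybar eps) y -> f x y <= maxf Y f x ybar eps.
Proof.
move=> Xx Yybar eps_ge0 Hy; have [ys _ ys_max] := max_att Xx Yybar eps_ge0.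
apply: sup_upper_bound; last by exists y.
split; first by exists (f x y), y.
by exists (f x ys) => _ [z Hz <-]; exact: ys_max.
Qed.

Lemma maxf_le x ybar eps y : (Y `&` eball ybar eps) y ->
  (forall y', (Y `&` eball ybar eps) y' -> f x y' <= f x y) ->
  maxf Y f x ybar eps <= f x y.
Proof.
move=> Hy y_max; apply: ge_sup; first by exists (f x y), y.
by move=> _ [z Hz <-]; exact: y_max.
Qed.

End MaxValue.

Lemma linear_radius_fun (R : realType) (kappa : R) : 0 < kappa ->
  radius_fun (fun d => kappa * d) /\ calm_at0 (fun d => kappa * d).
Proof.
move=> kappa_gt0; split; last by exists kappa, 1.
split; first by move=> d d_ge0; rewrite mulr_ge0 // ltW.
split; first by rewrite mulr0.
apply: cvg_at_right_filter; rewrite -[X in _ --> X](mulr0 kappa).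
by apply: cvgMl_tmp; exact: cvg_id.
Qed.

Section CalmMinimax.
Variables (R : realType) (n m : nat) (X : set 'rV[R]_n) (Y : set 'rV[R]_m)
  (f : 'rV[R]_n -> 'rV[R]_m -> R) (xbar : 'rV[R]_n) (ybar : 'rV[R]_m).
Hypotheses (max_att : max_attained X Y f) (Xxbar : X xbar) (Yybar : Y ybar).

(* Condition (1) of the theorem: the inner radius depends on |x - xbar|. *)
Definition sharp_minimax_cond (delta0 : R) (tau : R -> R) : Prop :=
  forall delta x y, 0 < delta <= delta0 ->
    (X `&` eball xbar delta) x -> (Y `&` eball ybar delta) y ->
    f xbar y <= f xbar ybar /\
    f xbar ybar <= maxf Y f x ybar (tau (enorm (x - xbar))).

(* Forward step 1: apply the minimax condition with delta := |x - xbar|;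
   the case x = xbar is handled by tau 0 = 0. *)
Lemma minimax_cond_sharp delta0 tau : radius_fun tau ->
  minimax_cond X Y f xbar ybar delta0 tau -> sharp_minimax_cond delta0 tau.
Proof.
move=> [_ [tau0 _]] mm delta x y delta_in Hx Hy.
split; first exact: (mm delta x y delta_in Hx Hy).1.
have [dist0|dist_neq0] := eqVneq (enorm (x - xbar)) 0.
  have -> : x = xbar by apply/eqP; rewrite -subr_eq0; apply/eqP; exact: enorm_eq0.
  rewrite subrr enorm0 tau0.
  by apply: (maxf_ge max_att) => //; split => //; exact: eball_center.
case: (Hx) => Xx x_near; move/andP: delta_in => [_ delta_le].
have dist_in : 0 < enorm (x - xbar) <= delta0.
  by rewrite lt_def dist_neq0 enorm_ge0 (le_trans x_near delta_le).
have Hx' : (X `&` eball xbar (enorm (x - xbar))) x by split => //; rewrite /eball /=.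
have Hybar : (Y `&` eball ybar (enorm (x - xbar))) ybar.
  by split => //; apply: eball_center; exact: enorm_ge0.
exact: (mm _ x ybar dist_in Hx' Hybar).2.
Qed.

(* Forward step 2: S_tau(xbar) is the argmax over {ybar}, so it contains ybar
   as soon as ybar maximises f(xbar, .) locally. *)
Lemma center_in_S_tau delta0 tau : 0 < delta0 -> radius_fun tau ->
  minimax_cond X Y f xbar ybar delta0 tau -> S_tau Y f tau xbar ybar xbar ybar.
Proof.
move=> delta0_gt0 [_ [tau0 _]] mm; rewrite /S_tau /= subrr enorm0 tau0.
split; first by split => //; exact: eball_center.
move=> y [Yy y_near].
have delta0_in : 0 < delta0 <= delta0 by rewrite delta0_gt0 lexx.
have Hxbar : (X `&` eball xbar delta0) xbar by split => //; exact/eball_center/ltW.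
have Hy : (Y `&` eball ybar delta0) y by split => //; exact: le_trans y_near (ltW _).
exact: (mm delta0 xbar y delta0_in Hxbar Hy).1.
Qed.

(* Forward step 3: a maximiser on the tau(|x - xbar|)-ball is within
   tau(|x - xbar|) <= kappa |x - xbar| of ybar. *)
Lemma inner_calm_of_calm tau : radius_fun tau -> calm_at0 tau ->
  S_tau Y f tau xbar ybar xbar ybar -> inner_calm (S_tau Y f tau xbar ybar) X xbar ybar.
Proof.
move=> [tau_ge0 _] [kappa [delta1 [kappa_gt0 [delta1_gt0 calm]]]] S_xbar.
split => //; exists kappa, delta1; split => //; split => // x [x_near Xx].
have radius_ge0 := tau_ge0 _ (enorm_ge0 (x - xbar)).
have [ys [Yys ys_near] ys_max] := max_att Xx Yybar radius_ge0.
exists ys; first by split.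
rewrite enormB; apply: le_trans ys_near _.
by apply: calm; rewrite enorm_ge0.
Qed.

Lemma minimax_cond_of_inner_calm delta0 tau kappa delta1 :
  sharp_minimax_cond delta0 tau ->
  (forall x, (eball xbar delta1 `&` X) x ->
     exists2 y, S_tau Y f tau xbar ybar x y & enorm (ybar - y) <= kappa * enorm (x - xbar)) ->
  0 < kappa ->
  minimax_cond X Y f xbar ybar (Num.min delta0 delta1) (fun d => kappa * d).
Proof.
move=> sharp selection kappa_gt0 delta x y /andP [delta_gt0].
rewrite le_min => /andP [delta_le0 delta_le1] Hx Hy.
have delta_in : 0 < delta <= delta0 by rewrite delta_gt0 delta_le0.
have [ybar_opt outer_max] := sharp delta x y delta_in Hx Hy.
split => //; case: (Hx) => Xx x_near.
have [ys [Hys ys_max] ys_near] := selection x (conj (le_trans x_near delta_le1) Xx).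
apply: le_trans outer_max _; apply: le_trans (maxf_le Hys ys_max) _.
apply: (maxf_ge max_att) => //; first by rewrite mulr_ge0 // ltW.
case: Hys => Yys _; split => //; rewrite /eball /= enormB.
by apply: le_trans ys_near _; rewrite ler_wpM2l // ltW.
Qed.

End CalmMinimax.

Theorem mainTheorem6 (R : realType) (n m : nat) (X : set 'rV[R]_n)
    (Y : set 'rV[R]_m) (f : 'rV[R]_n -> 'rV[R]_m -> R)
    (xbar : 'rV[R]_n) (ybar : 'rV[R]_m) :
  closed X -> closed Y -> X !=set0 -> Y !=set0 ->
  max_attained X Y f ->
  X xbar -> Y ybar ->
  calm_local_minimax X Y f xbar ybar <->
  exists delta0, exists tau, 0 < delta0 /\ radius_fun tau /\
    (forall delta x y, 0 < delta <= delta0 ->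
      (X `&` eball xbar delta) x -> (Y `&` eball ybar delta) y ->
      f xbar y <= f xbar ybar /\
      f xbar ybar <= maxf Y f x ybar (tau (enorm (x - xbar)))) /\
    inner_calm (S_tau Y f tau xbar ybar) X xbar ybar.
Proof.
move=> _ _ _ _ max_att Xxbar Yybar; split.
- move=> [_ [_ [delta0 [tau [delta0_gt0 [rad [calm mm]]]]]]].
  exists delta0, tau; split => //; split => //; split.
    exact (minimax_cond_sharp max_att Xxbar Yybar rad mm).
  have S_xbar := center_in_S_tau Xxbar Yybar delta0_gt0 rad mm.
  exact (inner_calm_of_calm max_att Yybar rad calm S_xbar).
- move=> [delta0 [tau [delta0_gt0 [_ [sharp [_ inner]]]]]].
  have [kappa [delta1 [kappa_gt0 [delta1_gt0 selection]]]] := inner.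
  have [rad calm] := linear_radius_fun kappa_gt0.
  split => //; split => //; exists (Num.min delta0 delta1), (fun d => kappa * d).
  split; first by rewrite lt_min delta0_gt0 delta1_gt0.
  split => //; split => //.
  exact (minimax_cond_of_inner_calm max_att Yybar sharp selection kappa_gt0).
Qed.
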